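(* In the supercuspidal setting below, let $p$ be odd, $L/\mathbb Q_p$ unramified, $k=c_0\ge2$, and assume $k\ge10$ or $p\ge10$. Let $\psi_0$ be the trivial character modulo $p^k$ and suppose $p\mid a_1a_2a_3$. Then $\widehat H(\psi_0,a_1,a_2,a_3)=0$ unless $p^k\mid a_1a_2a_3$, in which case $$\widehat H(\psi_0,a_1,a_2,a_3)=\overline\gamma\,p^{-2k}\,\tau_L(\xi)\,S(a_1,0;p^k)S(a_2,0;p^k)S(a_3,0;p^k),$$ where $\tau_L(\xi)=\sum_{t\in(\mathcal O_L/p^k\mathcal O_L)^\times}\xi(t)e_{p^k}(-\mathrm{Tr}(t))$ and $S(a,0;p^k)=\sum^*_{x\bmod p^k}e_{p^k}(ax)$.
   Context: Supercuspidal setting: $p$ is a prime, $L/\mathbb Q_p$ a quadratic extension with ring of integers $\mathcal O_L$, ramification index $e\in\{1,2\}$, $d=v_p(\mathrm{disc}(L/\mathbb Q_p))$; $\eta_L$ is the nontrivial quadratic character of $\mathbb Q_p^\times$ trivial on $\mathrm{Nm}(L^\times)$. $\xi$ is a character of $L^\times$ with $\xi\neq\xi\circ(\text{Galois conjugation})$ and $\xi|_{\mathbb Q_p^\times}=\eta_L$, with $(L/\mathbb Q_p,\xi)$ an admissible pair (corresponding to a trivial central character dihedral supercuspidal representation of $\mathrm{PGL}_2(\mathbb Q_p)$). $c(\xi)$ is its conductor exponent and $c_0=c(\xi)/e$. Set $\kappa=c_0$ if $L$ unramified, $\kappa=c_0+1$ if $L$ ramified. Let $\gamma$ be a fixed complex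 number of modulus $1$ depending only on $L$. For integers $m,n$ and $k\ge1$, $$H(m,n;p^k)=\overline\gamma\,p^{-d/2}\sum_{\substack{t\in(\mathcal O_L/p^k\mathcal O_L)^\times\\ \mathrm{Nm}(t)\equiv mn\ (p^k)}}\xi(t)\,e_{p^k}(-\mathrm{Tr}(t))$$ if $k\ge\kappa$ and $p\nmid mn$, and $H(m,n;p^k)=0$ otherwise. For a Dirichlet character $\psi$ mod $p^k$ and integers $a_1,a_2,a_3$, $$\widehat H(\psi,a_1,a_2,a_3)=p^{-2k}\sum_{u,x_1,x_2,x_3\bmod p^k}\overline\psi(u)H(\overline u x_1x_2x_3,1;p^k)\,e_{p^k}(a_1x_1+a_2x_2+a_3x_3-ua_1a_2a_3).$$ Here $e_q(x)=\exp(2\pi i x/q)$, $\overline u$ is the inverse mod $p^k$, and Dirichlet characters vanish on non-units. *)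

From mathcomp Require Import all_boot all_algebra.
From mathcomp Require Import reals trigo.
From mathcomp Require Export complex.
Set Implicit Arguments. Unset Strict Implicit. Unset Printing Implicit Defensive.
Import GRing.Theory Num.Theory.
Local Open Scope ring_scope.

(* Model of O_L / p^k O_L for L/Q_p unramified, p odd:  O_L = Z_p[sqrt eps]
   with eps a non-square unit; an element x + y sqrt(eps) is the pair (x,y)
   of residues modulo q = p^k. *)

Section Defs.
Variable R : realType.
Variable q : nat.
Variable eps : int.

Definition ZL := ('Z_q * 'Z_q)%type.

Definition Lone : ZL := (1, 0).
Definition Lmul (a b : ZL) : ZL :=
  (a.1 * b.1 + eps%:~R * a.2 * b.2, a.1 * b.2 + a.2 * b.1).
Definition Lnorm (a : ZL) : 'Z_q := a.1 ^+ 2 - eps%:~R * a.2 ^+ 2.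
Definition Ltr (a : ZL) : 'Z_q := a.1 *+ 2.
Definition Lconj (a : ZL) : ZL := (a.1, - a.2).
Definition Lunit (a : ZL) : bool := Lnorm a \is a GRing.unit.

Definition eq_ (x : int) : R[i] :=
  let th := (2 * pi * x%:~R / q%:R) : R in (cos th +i* sin th)%C.
Definition eZ (x : 'Z_q) : R[i] := eq_ (Posz (val x)).

Definition tauL (xi : ZL -> R[i]) : R[i] :=
  \sum_(t : ZL | Lunit t) xi t * eZ (- Ltr t).

Definition Ram (a : int) : R[i] :=
  \sum_(x : 'Z_q | x \is a GRing.unit) eZ (a%:~R * x).

Definition Hker (p k kappa : nat) (gamma : R[i]) (xi : ZL -> R[i]) (m n : int)
  : R[i] :=
  if (kappa <= k)%N && ~~ (p%:Z %| m * n)%Z then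
    (gamma^*)%C *
      \sum_(t : ZL | Lunit t && (Lnorm t == (m * n)%:~R)) xi t * eZ (- Ltr t)
  else 0.

(* \hat H(psi, a1, a2, a3), psi a Dirichlet character mod q viewed on 'Z_q;
   the inverse u^-1 is taken in 'Z_q (only relevant when u is a unit,
   since psi vanishes on non-units) *)
Definition Hhat (p k kappa : nat) (gamma : R[i]) (xi : ZL -> R[i])
  (psi : 'Z_q -> R[i]) (a1 a2 a3 : int) : R[i] :=
  ((p%:R ^+ (2 * k))^-1) *
  \sum_(u : 'Z_q) \sum_(x1 : 'Z_q) \sum_(x2 : 'Z_q) \sum_(x3 : 'Z_q)
     ((psi u)^*)%C * Hker p k kappa gamma xi (Posz (val (u^-1 * x1 * x2 * x3))) 1
     * eZ (a1%:~R * x1 + a2%:~R * x2 + a3%:~R * x3 - u * (a1 * a2 * a3)%:~R).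

Definition psi0 (u : 'Z_q) : R[i] := if u \is a GRing.unit then 1 else 0.

End Defs.

From mathcomp Require Import all_boot all_order all_algebra.
From mathcomp Require Import reals trigo complex.
From mathcomp Require Import ring lra zify.
Set Implicit Arguments. Unset Strict Implicit. Unset Printing Implicit Defensive.
Import Order.TTheory GRing.Theory Num.Theory.
Local Open Scope ring_scope.

(* With psi0 trivial, summing over u turns the kernel into
   gamma^* sum_t xi(t) e(-Tr t) T(Nm t), where T(n) is the sum over units
   x1, x2, x3 of e(a1 x1 + a2 x2 + a3 x3 - x1 x2 x3 a1 a2 a3 / n).  If p^k
   divides A = a1 a2 a3, the cubic term disappears and T(n) is the product
   of three Ramanujan sums.  Otherwise, with v = v_p(A) and 1 <= v < k, the
   shift x_i -> x_i + p^(k-v) permutes the units and leaves the cubic term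
   unchanged, while multiplying T(n) by e(a_i p^(k-v)); since v_p(a_i) < v
   for i = 1 or i = 2, this factor is not 1 and T(n) = 0. *)

Section AdditiveCharacter.
Variables (R : realType) (q : nat).
Hypothesis q_gt1 : (1 < q)%N.

Lemma eq_D (x y : int) : eq_ R q (x + y) = eq_ R q x * eq_ R q y.
Proof.
rewrite /eq_ [RHS]/GRing.mul /= -cosD (addrC (cos _ * _)) -sinD.
by rewrite intrD !mulrDr !mulrDl.
Qed.

Lemma eq_mulq (j : nat) : eq_ R q (q * j)%N = 1.
Proof.
have q_neq0 : (q%:R : R) != 0 by rewrite pnatr_eq0 -lt0n ltnW.
rewrite /eq_; have -> : (2 * pi * ((q * j)%N : int)%:~R / q%:R : R) = (pi *+ 2) *+ j.
  rewrite -[((q * j)%N : int)%:~R]/((q * j)%:R) natrM [q%:R * _]mulrC mulrA.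
  by rewrite mulfK // mulr_natr mulr_natl.
elim: j => [|j IHj]; first by rewrite mulr0n cos0 sin0.
by rewrite mulrS addrC cosD2pi sinD2pi.
Qed.

Lemma eq_modq (m : nat) : eq_ R q (m %% q)%N = eq_ R q m.
Proof. by rewrite {2}(divn_eq m q) PoszD eq_D mulnC eq_mulq mul1r. Qed.

Lemma eZD (x y : 'Z_q) : eZ R (x + y) = eZ R x * eZ R y.
Proof.
have eq_modZp (m : nat) : eq_ R q (m %% (Zp_trunc q).+2)%N = eq_ R q m.
  by rewrite Zp_cast // eq_modq.
by rewrite /eZ -eq_D -PoszD /= eq_modZp.
Qed.

Lemma eZ_neq1 (y : 'Z_q) : y != 0 -> eZ R y != 1.
Proof.
apply: contra_neqN => /eqP; rewrite /eZ /eq_ /= => -[cos1 sin0].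
have q_gt0 : (0 : R) < q%:R by rewrite ltr0n ltnW.
have y_lt : (val y < q)%N by apply: leq_trans (ltn_ord y) _; rewrite Zp_cast.
apply/val_inj/eqP; rewrite /= eqn0Ngt; apply/negP => y_gt0.
set th := (2 * pi * _ / _ : R) in cos1 sin0.
have th_gt0 : 0 < th by rewrite divr_gt0 // !mulr_gt0 ?pi_gt0 // ltr0n.
have th_lt2pi : th < 2 * pi.
  rewrite ltr_pdivrMr // ltr_pM2l ?mulr_gt0 ?pi_gt0 //.
  by rewrite -[_%:~R]/(_%:R) ltr_nat.
(* the only zero of sin on (0, 2 pi) is pi, where cos is -1 *)
case: (ltgtP th pi) => [th_lt|th_gt|th_pi].
- by move: (sin_gt0_pi (andb_true_intro (conj th_gt0 th_lt))); rewrite sin0 ltxx.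
- have : 0 < th - pi < pi by rewrite subr_gt0 th_gt /= ltrBlDr -mulr2n -mulr_natl.
  by move/sin_gt0_pi; rewrite -oppr_lt0 -sinDpi subrK sin0 ltxx.
- by move: cos1; rewrite th_pi cospi => ?; lra.
Qed.

End AdditiveCharacter.

Section PrimePowerModulus.
Variables (p k : nat).
Hypotheses (p_prime : prime p) (k_gt0 : (0 < k)%N).
Local Notation q := (p ^ k)%N.

Lemma pexp_gt1 : (1 < q)%N.
Proof. by rewrite -{1}(expn0 p) ltn_exp2l ?prime_gt1. Qed.

Lemma unitZp_pexpE (y : 'Z_q) : (y \is a GRing.unit) = ~~ (p %| val y)%N.
Proof.
rewrite -[y in LHS]natr_Zp unitZpE ?pexp_gt1 //.
by rewrite coprime_pexpl // prime_coprime.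
Qed.

Lemma unitZp_addr (x c : 'Z_q) : c \isn't a GRing.unit ->
  (x + c \is a GRing.unit) = (x \is a GRing.unit).
Proof.
have dvdn_modZp (m : nat) : (p %| m %% (Zp_trunc q).+2)%N = (p %| m)%N.
  by rewrite Zp_cast ?pexp_gt1 // /dvdn modn_dvdm // -{1}(expn1 p) dvdn_exp2l.
by rewrite !unitZp_pexpE negbK /= dvdn_modZp => /dvdn_addl ->.
Qed.

Lemma intr_Zp_eq0 (z : int) : ((z%:~R : 'Z_q) == 0) = (q%:Z %| z)%Z.
Proof.
have natr_eq0 (n : nat) : ((n%:R : 'Z_q) == 0) = (q %| n)%N.
  by rewrite -val_eqE /= val_Zp_nat ?pexp_gt1.
case: z => n; first exact: natr_eq0.
by rewrite NegzE mulrNz oppr_eq0 dvdzE abszN /= natr_eq0.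
Qed.

Lemma intr_mul_pexp_eq0 (a : int) (m : nat) : a != 0 ->
  ((a%:~R * (p ^ m)%:R : 'Z_q) == 0) = (k <= logn p `|a| + m)%N.
Proof.
move=> a_neq0; have pm_gt0 : (0 < p ^ m)%N by rewrite expn_gt0 prime_gt0.
rewrite -[(p ^ m)%:R]/(((p ^ m)%N : int)%:~R) -intrM intr_Zp_eq0 dvdzE abszM /=.
rewrite pfactor_dvdn ?muln_gt0 ?absz_gt0 ?a_neq0 //.
by rewrite lognM ?absz_gt0 // pfactorK.
Qed.

Lemma exists_nonunit_shift (a1 a2 a3 : int) :
  (p%:Z %| a1 * a2 * a3)%Z -> ~~ (q%:Z %| a1 * a2 * a3)%Z ->
  exists c : 'Z_q, [/\ c \isn't a GRing.unit,
    (a1 * a2 * a3)%:~R * c = 0 & (a1%:~R * c != 0) || (a2%:~R * c != 0)].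
Proof.
set A := a1 * a2 * a3 => p_dvd_A q_ndvd_A.
have A_neq0 : A != 0 by apply: contraNneq q_ndvd_A => ->; exact: dvdz0.
have := A_neq0; rewrite !mulf_eq0 !negb_or => /andP[/andP[a1_neq0 a2_neq0] a3_neq0].
set v := logn p `|A|.
have vE : v = (logn p `|a1| + logn p `|a2| + logn p `|a3|)%N.
  by rewrite /v !abszM !lognM ?muln_gt0 ?absz_gt0 ?a1_neq0 ?a2_neq0 ?a3_neq0.
have v_gt0 : (0 < v)%N.
  by rewrite -(pfactor_dvdn 1 p_prime) ?absz_gt0 // expn1 -dvdzE.
have v_lt_k : (v < k)%N.
  rewrite ltnNge; apply: contraNN q_ndvd_A => k_le_v; rewrite dvdzE.
  exact: dvdn_trans (dvdn_exp2l p k_le_v) (pfactor_dvdnn p _).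
exists (p ^ (k - v))%:R; split.
- rewrite unitZpE ?pexp_gt1 // coprime_pexpl // prime_coprime // negbK.
  by rewrite dvdn_exp ?subn_gt0.
- by apply/eqP; rewrite intr_mul_pexp_eq0 // -/v subnKC // ltnW.
- by rewrite !intr_mul_pexp_eq0 //; lia.
Qed.

(* A nonunit shift permutes the units, so a sum over units that the shift
   multiplies by w != 1 vanishes. *)
Lemma sum_units_shift_eq0 (V : idomainType) (f : 'Z_q -> V) (c : 'Z_q)
    (w : V) :
  c \isn't a GRing.unit -> w != 1 -> (forall x, f (x + c) = w * f x) ->
  \sum_(x : 'Z_q | x \is a GRing.unit) f x = 0.
Proof.
move=> c_nonunit w_neq1 f_shift.
set S := \sum_(x | _) f x.
have S_fixed : S = w * S.
  rewrite {1}/S (reindex_inj (addIr c)) /= mulr_sumr.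
  by apply: eq_big => [x|x _]; [exact: unitZp_addr | exact: f_shift].
have /eqP : (1 - w) * S = 0 by rewrite mulrBl mul1r -S_fixed subrr.
by rewrite mulf_eq0 subr_eq0 eq_sym (negbTE w_neq1) => /eqP.
Qed.

End PrimePowerModulus.

Lemma exchange_big3_inner (V : nmodType) (I J : finType) (P : pred J)
    (F : I -> I -> I -> J -> V) :
  \sum_(x1 : I) \sum_(x2 : I) \sum_(x3 : I) \sum_(j | P j) F x1 x2 x3 j =
  \sum_(j | P j) \sum_(x1 : I) \sum_(x2 : I) \sum_(x3 : I) F x1 x2 x3 j.
Proof.
rewrite [RHS]exchange_big; apply: eq_bigr => x1 _ /=.
under eq_bigr do rewrite exchange_big; exact: exchange_big.
Qed.

Lemma big_unit_prod3 (K : finComUnitRingType) (V : nmodType)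
    (F : K -> K -> K -> V) :
  \sum_(x1 : K) \sum_(x2 : K) \sum_(x3 : K)
      (if x1 * x2 * x3 \is a GRing.unit then F x1 x2 x3 else 0) =
  \sum_(x1 : K | x1 \is a GRing.unit) \sum_(x2 : K | x2 \is a GRing.unit)
      \sum_(x3 : K | x3 \is a GRing.unit) F x1 x2 x3.
Proof.
rewrite [RHS]big_mkcond; apply: eq_bigr => x1 _ /=.
rewrite [in RHS]big_mkcond; case: ifP => x1_unit; last first.
  by rewrite big1 // => x2 _; rewrite big1 // => x3 _; rewrite !unitrM x1_unit.
apply: eq_bigr => x2 _ /=; rewrite [in RHS]big_mkcond; case: ifP => x2_unit.
  by apply: eq_bigr => x3 _; rewrite !unitrM x1_unit x2_unit.
by rewrite big1 // => x3 _; rewrite !unitrM x2_unit andbF.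
Qed.

Section DualSum.
Variables (R : realType) (p k : nat) (eps : int) (gamma : R[i])
  (xi : ZL (p ^ k) -> R[i]) (a1 a2 a3 : int).
Hypotheses (p_prime : prime p) (k_gt0 : (0 < k)%N).
Local Notation q := (p ^ k)%N.
Local Notation A := ((a1 * a2 * a3)%:~R : 'Z_q).

Definition dual_phase (u x1 x2 x3 : 'Z_q) : R[i] :=
  eZ R (a1%:~R * x1 + a2%:~R * x2 + a3%:~R * x3 - u * A).

Definition unit_phase_sum (n : 'Z_q) : R[i] :=
  \sum_(x1 : 'Z_q | x1 \is a GRing.unit) \sum_(x2 : 'Z_q | x2 \is a GRing.unit)
    \sum_(x3 : 'Z_q | x3 \is a GRing.unit) dual_phase (x1 * x2 * x3 / n) x1 x2 x3.

Lemma HkerE (y : 'Z_q) : Hker eps p k k gamma xi (Posz (val y)) 1 =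
  if y \is a GRing.unit then (gamma^*)%C *
    \sum_(t : ZL q | Lunit eps t && (Lnorm eps t == y)) xi t * eZ R (- Ltr t)
  else 0.
Proof.
rewrite /Hker leqnn mulr1 dvdzE /= unitZp_pexpE //; case: (p %| val y)%N => //=.
congr (_ * _); apply: eq_bigl => t.
by rewrite -[(Posz _)%:~R]/((val y)%:R) natr_Zp.
Qed.

(* Only u = X / Nm t contributes for the summand indexed by t. *)
Lemma sum_psi0_Hker (x1 x2 x3 : 'Z_q) :
  \sum_(u : 'Z_q) ((@psi0 R q u)^*)%C *
     Hker eps p k k gamma xi (Posz (val (u^-1 * x1 * x2 * x3))) 1 *
     dual_phase u x1 x2 x3 =
  if x1 * x2 * x3 \is a GRing.unit then (gamma^*)%C *
    \sum_(t : ZL q | Lunit eps t) xi t * eZ R (- Ltr t) *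
      dual_phase (x1 * x2 * x3 / Lnorm eps t) x1 x2 x3
  else 0.
Proof.
set X := x1 * x2 * x3.
have uX u : u^-1 * x1 * x2 * x3 = u^-1 * X by rewrite /X !mulrA.
under eq_bigr do rewrite uX.
have [X_unit|X_nonunit] := boolP (X \is a GRing.unit); last first.
  by rewrite big1 // => u _; rewrite HkerE unitrM (negbTE X_nonunit) andbF mulr0 mul0r.
rewrite mulr_sumr [RHS](eq_bigr (fun t => \sum_(u : 'Z_q)
  if u == X / Lnorm eps t then (gamma^*)%C *
    (xi t * eZ R (- Ltr t) * dual_phase u x1 x2 x3) else 0)) => [|t _]; last first.
  by rewrite -big_mkcond big_pred1_eq.
rewrite exchange_big; apply: eq_bigr => u _.
rewrite HkerE /psi0 unitrM unitrV X_unit andbT -big_mkcondr /=.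
have [u_unit|u_nonunit] := boolP (u \is a GRing.unit); last first.
  rewrite conjc0 !mul0r big_pred0 // => t; apply/negbTE/negP => /andP[t_unit /eqP u_eq].
  by move: u_nonunit; rewrite u_eq unitrM unitrV X_unit => /negP[].
rewrite conjc1 mul1r big_distrr big_distrl /=; apply: eq_big => [t|t _].
  apply: andb_id2l => t_unit; apply/eqP/eqP => [->|->].
    by rewrite invrM ?unitrV // invrK mulVKr.
  by rewrite invrM ?unitrV // invrK mulrVK.
by rewrite !mulrA.
Qed.

Lemma Hhat_psi0E : Hhat eps p k k gamma xi (@psi0 R q) a1 a2 a3 =
  (p%:R ^+ (2 * k))^-1 * ((gamma^*)%C *
    \sum_(t : ZL q | Lunit eps t) xi t * eZ R (- Ltr t) *
      unit_phase_sum (Lnorm eps t)).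
Proof.
set X := fun x1 x2 x3 : 'Z_q => x1 * x2 * x3.
rewrite /Hhat -(@exchange_big3_inner _ _ _ (fun _ => true)); congr (_ * _).
transitivity (\sum_(x1 : 'Z_q) \sum_(x2 : 'Z_q) \sum_(x3 : 'Z_q)
  \sum_(t : ZL q | Lunit eps t) (gamma^*)%C * (xi t * eZ R (- Ltr t) *
    if X x1 x2 x3 \is a GRing.unit
    then dual_phase (X x1 x2 x3 / Lnorm eps t) x1 x2 x3 else 0)).
  apply: eq_bigr => x1 _; apply: eq_bigr => x2 _; apply: eq_bigr => x3 _.
  rewrite sum_psi0_Hker /X; case: ifP => _; first by rewrite mulr_sumr.
  by rewrite big1 // => t _; rewrite !mulr0.
rewrite exchange_big3_inner mulr_sumr; apply: eq_bigr => t _.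
rewrite /unit_phase_sum -big_unit_prod3 mulrA mulr_sumr; apply: eq_bigr => x1 _.
rewrite mulr_sumr; apply: eq_bigr => x2 _.
by rewrite mulr_sumr; apply: eq_bigr => x3 _; rewrite mulrA.
Qed.

Lemma unit_phase_sum_ram (n : 'Z_q) : A = 0 ->
  unit_phase_sum n = Ram R q a1 * Ram R q a2 * Ram R q a3.
Proof.
move=> A_eq0; rewrite /unit_phase_sum /Ram !big_distrl /=; apply: eq_bigr => x1 _.
rewrite -mulrA big_distrl big_distrr /=; apply: eq_bigr => x2 _.
rewrite mulrA big_distrr /=; apply: eq_bigr => x3 _.
by rewrite /dual_phase A_eq0 mulr0 subr0 !(eZD R (pexp_gt1 p_prime k_gt0)).
Qed.

Lemma dual_phase_shift (n c1 c2 x1 x2 x3 : 'Z_q) : A * c1 = 0 -> A * c2 = 0 ->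
  dual_phase ((x1 + c1) * (x2 + c2) * x3 / n) (x1 + c1) (x2 + c2) x3 =
  eZ R (a1%:~R * c1 + a2%:~R * c2) * dual_phase (x1 * x2 * x3 / n) x1 x2 x3.
Proof.
move=> Ac1 Ac2; rewrite /dual_phase -(eZD R (pexp_gt1 p_prime k_gt0)); congr eZ.
have -> : (x1 + c1) * (x2 + c2) * x3 / n * A =
    x1 * x2 * x3 / n * A + (x2 + c2) * x3 / n * (A * c1) + x1 * x3 / n * (A * c2)
  by ring.
by rewrite Ac1 Ac2 !mulr0 !addr0; ring.
Qed.

Lemma unit_phase_sum_eq0 (n c : 'Z_q) : c \isn't a GRing.unit -> A * c = 0 ->
  (a1%:~R * c != 0) || (a2%:~R * c != 0) -> unit_phase_sum n = 0.
Proof.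
have q_gt1 := pexp_gt1 p_prime k_gt0.
move=> c_nonunit Ac /orP[a1c|a2c]; rewrite /unit_phase_sum.
- apply: (sum_units_shift_eq0 p_prime k_gt0 c_nonunit (eZ_neq1 R q_gt1 a1c)) => x1.
  rewrite mulr_sumr; apply: eq_bigr => x2 _; rewrite mulr_sumr; apply: eq_bigr => x3 _.
  by have := dual_phase_shift n x1 x2 x3 Ac (mulr0 A); rewrite !addr0 mulr0 addr0.
- apply: big1 => x1 _.
  apply: (sum_units_shift_eq0 p_prime k_gt0 c_nonunit (eZ_neq1 R q_gt1 a2c)) => x2.
  rewrite mulr_sumr; apply: eq_bigr => x3 _.
  by have := dual_phase_shift n x1 x2 x3 (mulr0 A) Ac; rewrite !addr0 mulr0 add0r.
Qed.

End DualSum.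

Theorem lemma5p12 (R : realType) (p k : nat) (eps : int)
  (gamma : R[i]) (xi : ZL (p ^ k) -> R[i]) (a1 a2 a3 : int) :
  prime p -> odd p ->
  (forall x : int, ~~ (p%:Z %| x ^+ 2 - eps)%Z) ->
  `|gamma| = 1 ->
  xi (Lone (p ^ k)) = 1 ->
  (forall a b, Lunit eps a -> Lunit eps b ->
     xi (Lmul eps a b) = xi a * xi b) ->
  (forall x : 'Z_(p ^ k), x \is a GRing.unit -> xi (x, 0) = 1) ->
  (exists t, Lunit eps t /\ xi (Lconj t) != xi t) ->
  (exists x y : 'Z_(p ^ k),
     xi (1 + (p ^ k.-1)%:R * x, (p ^ k.-1)%:R * y) != 1) ->
  (2 <= k)%N -> (10 <= k)%N || (10 <= p)%N ->
  (p%:Z %| a1 * a2 * a3)%Z ->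
  Hhat eps p k k gamma xi (@psi0 R (p ^ k)) a1 a2 a3 =
  if ((p ^ k)%:Z %| a1 * a2 * a3)%Z then
    (gamma^*)%C * (p%:R ^+ (2 * k))^-1 * tauL eps xi
      * Ram R (p ^ k) a1 * Ram R (p ^ k) a2 * Ram R (p ^ k) a3
  else 0.
Proof.
move=> p_prime _ _ _ _ _ _ _ _ k_ge2 _ p_dvd_A.
have k_gt0 : (0 < k)%N by apply: ltnW.
rewrite Hhat_psi0E //; case: ifP => [q_dvd_A|/negbT q_ndvd_A].
  have A_eq0 : ((a1 * a2 * a3)%:~R : 'Z_(p ^ k)) = 0.
    by apply/eqP; rewrite intr_Zp_eq0.
  under eq_bigr do rewrite (unit_phase_sum_ram R p_prime k_gt0 _ A_eq0).
  by rewrite -big_distrl /= -/(tauL eps xi); ring.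
have [c [c_nonunit Ac a12c]] := exists_nonunit_shift p_prime k_gt0 p_dvd_A q_ndvd_A.
rewrite big1 ?mulr0 // => t _.
by rewrite (unit_phase_sum_eq0 R p_prime k_gt0 _ c_nonunit Ac a12c) mulr0.
Qed.
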